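(* Let $N\ge 1$ and $-\infty<a_i\le b_i<\infty$ with $r_i=(b_i-a_i)/2>0$ for all $i$; set $m_i=(a_i+b_i)/2$, $\Theta=\prod_{i=1}^N[a_i,b_i]$, $T(y)=\sum_{i=1}^N y_i$. Fix a sampling design $p$ with inclusion probabilities $\pi_i=\mathbb P_p(i\in S)>0$ for every $i$. Then the estimator $\widehat T(y_S)=\sum_{i=1}^N m_i+\sum_{i\in S}\frac{y_i-m_i}{\pi_i}$ is admissible in the class of unbiased estimators under squared-error loss: there is no unbiased estimator $\delta$ with $R(\delta,p;y)\le R(\widehat T,p;y)$ for all $y\in\Theta$ and strict inequality for some $y\in\Theta$.
   Context: A sampling design is a probability distribution $p$ on the subsets $s\subseteq\{1,\dots,N\}$; $S$ denotes the random sample drawn from $p$, $\mathbb P_p$ and $\mathbb E_p$ denote probability and expectation with respect to $p$. An estimator $\delta$ is a collection of measurable functions $\delta_s:\Theta_s\to\mathbb R$, one for each subset $s$, where $\Theta_s=\prod_{i\in s}[a_i,b_i]$; for $y\in\Theta$ write $y_s=(y_i)_{i\in s}$. The estimator is unbiased if $\mathbb E_p[\delta_S(y_S)]=T(y)$ for all $y\in\Theta$. The risk is $R(\delta,p;y)=\mathbb E_p[(\delta_S(y_S)-T(y))^2]$. *)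

From mathcomp Require Import all_boot all_order all_algebra.
From mathcomp Require Import reals.
Set Implicit Arguments. Unset Strict Implicit. Unset Printing Implicit Defensive.
Import Order.TTheory GRing.Theory Num.Theory.
Local Open Scope ring_scope.

Section Sampling.
Variables (R : realType) (N : nat).

Definition is_design (p : {set 'I_N} -> R) : Prop :=
  (forall s, 0 <= p s) /\ \sum_(s : {set 'I_N}) p s = 1.

Definition incl_prob (p : {set 'I_N} -> R) (i : 'I_N) : R :=
  \sum_(s : {set 'I_N} | i \in s) p s.

Definition inTheta (a b : 'I_N -> R) (y : 'I_N -> R) : Prop :=
  forall i, a i <= y i <= b i.

Definition total (y : 'I_N -> R) : R := \sum_i y i.

(* An estimator: for each subset s a real function of the sample data.
   It is represented as a function of y that (on Theta) depends only on y_s. *)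
Definition estimator := {set 'I_N} -> ('I_N -> R) -> R.

Definition depends_on_sample (a b : 'I_N -> R) (delta : estimator) : Prop :=
  forall (s : {set 'I_N}) y y', inTheta a b y -> inTheta a b y' ->
    (forall i, i \in s -> y i = y' i) -> delta s y = delta s y'.

Definition Ep (p : {set 'I_N} -> R) (f : {set 'I_N} -> R) : R :=
  \sum_(s : {set 'I_N}) p s * f s.

Definition unbiased (a b : 'I_N -> R) (p : {set 'I_N} -> R) (delta : estimator) : Prop :=
  forall y, inTheta a b y -> Ep p (fun s => delta s y) = total y.

Definition risk (p : {set 'I_N} -> R) (delta : estimator) (y : 'I_N -> R) : R :=
  Ep p (fun s => (delta s y - total y) ^+ 2).

Definition That (a b : 'I_N -> R) (p : {set 'I_N} -> R) : estimator :=
  fun s y => \sum_i ((a i + b i) / 2)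
           + \sum_(i in s) (y i - (a i + b i) / 2) / incl_prob p i.

End Sampling.

From Pilot Require Import Defs.
From mathcomp Require Import all_boot all_order all_algebra.
From mathcomp Require Import reals.
From mathcomp Require Import ring lra.
Set Implicit Arguments. Unset Strict Implicit. Unset Printing Implicit Defensive.
Import Order.TTheory GRing.Theory Num.Theory.
Local Open Scope ring_scope.

(* Let D(y) = {i | y_i <> m_i}.  If an unbiased delta dominates That, then
   delta_s(y) = That_s(y) for every s in the support of p, by strong induction
   on |D(y)|.  If s does not contain D(y), resetting y to m off s gives a point
   y' with the same sample data and D(y') a proper subset of D(y), so
   delta_s(y) = delta_s(y') = That_s(y') = That_s(y).  If s contains D(y),
   That_s(y) is a constant c independent of s.  Hence
   (delta - That) (That - c) = 0 on the support, and since both estimators are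
   unbiased, risk delta = risk That + E[(delta - That)^2]; domination then
   forces delta = That on the support, so the risks are equal. *)

Section Expectation.
Variables (R : realType) (N : nat) (p : {set 'I_N} -> R).
Implicit Types (f g : {set 'I_N} -> R) (c t : R).

Lemma eq_Ep_support f g : (forall s, p s != 0 -> f s = g s) -> Ep p f = Ep p g.
Proof.
move=> fg; apply: eq_bigr => s _.
by case: (eqVneq (p s) 0) => [->|ps]; rewrite ?mul0r ?fg.
Qed.

Lemma EpD f g : Ep p (fun s => f s + g s) = Ep p f + Ep p g.
Proof. by rewrite /Ep -big_split; apply: eq_bigr => s _; rewrite mulrDr. Qed.

Lemma EpB f g : Ep p (fun s => f s - g s) = Ep p f - Ep p g.
Proof. by rewrite /Ep -sumrB; apply: eq_bigr => s _; rewrite mulrBr. Qed.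

Lemma EpZ c f : Ep p (fun s => c * f s) = c * Ep p f.
Proof. by rewrite /Ep mulr_sumr; apply: eq_bigr => s _; rewrite mulrCA. Qed.

Lemma Ep_cst c : \sum_s p s = 1 -> Ep p (fun=> c) = c.
Proof. by move=> p1; rewrite /Ep -mulr_suml p1 mul1r. Qed.

Lemma Ep_sum_mem (F : 'I_N -> R) :
  Ep p (fun s => \sum_(i in s) F i) = \sum_i incl_prob p i * F i.
Proof.
rewrite /Ep (eq_bigr (fun s : {set 'I_N} => \sum_i if i \in s then p s * F i else 0)).
  by rewrite exchange_big; apply: eq_bigr => i _; rewrite -big_mkcond mulr_suml.
by move=> s _; rewrite mulr_sumr big_mkcond.
Qed.

Lemma Ep_sqr_ge0 f : (forall s, 0 <= p s) -> 0 <= Ep p (fun s => f s ^+ 2).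
Proof. by move=> p0; apply: sumr_ge0 => s _; rewrite mulr_ge0 ?sqr_ge0. Qed.

Lemma Ep_sqr_eq0 f : (forall s, 0 <= p s) ->
  Ep p (fun s => f s ^+ 2) = 0 -> forall s, p s != 0 -> f s = 0.
Proof.
move=> p0 /psumr_eq0P E s ps.
have /eqP := E (fun s _ => mulr_ge0 (p0 s) (sqr_ge0 (f s))) s isT.
by rewrite mulf_eq0 (negbTE ps) sqrf_eq0 => /eqP.
Qed.

Lemma Ep_sqr_dev_split f g t :
  Ep p (fun s => (f s - t) ^+ 2) =
  Ep p (fun s => (g s - t) ^+ 2) + Ep p (fun s => (f s - g s) ^+ 2)
  + 2 * Ep p (fun s => (f s - g s) * (g s - t)).
Proof. by rewrite -EpZ -!EpD; apply: eq_bigr => s _; congr (_ * _); ring. Qed.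

Lemma Ep_cross_eq0 f g t c : Ep p f = Ep p g ->
  (forall s, p s != 0 -> (f s - g s) * (g s - c) = 0) ->
  Ep p (fun s => (f s - g s) * (g s - t)) = 0.
Proof.
move=> Efg orth.
rewrite (eq_Ep_support (g := fun s => (c - t) * (f s - g s))).
  by rewrite EpZ EpB Efg subrr mulr0.
move=> s ps; have := orth s ps; lra.
Qed.

Lemma eq_support_of_Ep_sqr_le f g t c : (forall s, 0 <= p s) ->
  Ep p f = Ep p g ->
  (forall s, p s != 0 -> (f s - g s) * (g s - c) = 0) ->
  Ep p (fun s => (f s - t) ^+ 2) <= Ep p (fun s => (g s - t) ^+ 2) ->
  forall s, p s != 0 -> f s = g s.
Proof.
move=> p0 Efg orth le.
have : Ep p (fun s => (f s - g s) ^+ 2) = 0.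
  apply/le_anti/andP; split; last exact: Ep_sqr_ge0.
  by move: le; rewrite (Ep_sqr_dev_split f g) (Ep_cross_eq0 t Efg orth); lra.
by move=> /(Ep_sqr_eq0 p0) f_g s /f_g /subr0_eq.
Qed.

End Expectation.

Section MidpointEstimator.
Variables (R : realType) (N : nat) (a b : 'I_N -> R) (p : {set 'I_N} -> R).
Implicit Types (y : 'I_N -> R) (s : {set 'I_N}).

Definition mid i := (a i + b i) / 2.

Definition off_mid y := [set i | y i != mid i].

Definition patch_mid s y i := if i \in s then y i else mid i.

Lemma patch_mid_inTheta s y : (forall i, a i <= b i) ->
  inTheta a b y -> inTheta a b (patch_mid s y).
Proof.
move=> ab hy i; rewrite /patch_mid; case: ifP => _; first exact: hy.
by have := ab i; rewrite /mid => abi; apply/andP; split; lra.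
Qed.

Lemma off_mid_patch s y : off_mid (patch_mid s y) = off_mid y :&: s.
Proof.
apply/setP => i; rewrite !inE /patch_mid.
by case: (i \in s); rewrite ?eqxx ?andbT ?andbF.
Qed.

Lemma That_eq_on_sample s y y' : {in s, y =1 y'} ->
  That a b p s y = That a b p s y'.
Proof. by move=> yy'; rewrite /That; congr (_ + _); apply: eq_bigr => i /yy' ->. Qed.

Lemma That_off_mid_sub s y : off_mid y \subset s ->
  That a b p s y = That a b p setT y.
Proof.
move=> sub; rewrite /That; congr (_ + _).
rewrite big_mkcond [RHS]big_mkcond; apply: eq_bigr => i _; rewrite in_setT.
case: ifP => // i_s; have : i \notin off_mid y by exact: contraFN (subsetP sub i) i_s.
by rewrite inE negbK -/(mid i) => /eqP ->; rewrite subrr mul0r.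
Qed.

Lemma That_unbiased y : \sum_s p s = 1 -> (forall i, incl_prob p i != 0) ->
  Ep p (fun s => That a b p s y) = Defs.total y.
Proof.
move=> p1 pi0; rewrite /That EpD Ep_cst // Ep_sum_mem.
under [X in _ + X]eq_bigr => i _ do rewrite mulrCA divff // mulr1.
by rewrite sumrB /Defs.total addrC subrK.
Qed.

End MidpointEstimator.

Section Admissibility.
Variables (R : realType) (N : nat) (a b : 'I_N -> R) (p : {set 'I_N} -> R).
Hypothesis ab : forall i, a i <= b i.
Hypothesis design_p : is_design p.
Hypothesis pi_neq0 : forall i, incl_prob p i != 0.
Variable delta : estimator R N.
Hypothesis delta_sample : depends_on_sample a b delta.
Hypothesis delta_unbiased : unbiased a b p delta.
Hypothesis delta_dominates :
  forall y, inTheta a b y -> risk p delta y <= risk p (That a b p) y.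

Lemma dominating_unbiased_eq_That y : inTheta a b y ->
  forall s, p s != 0 -> delta s y = That a b p s y.
Proof.
have [n] := ubnP #|off_mid a b y|; elim: n y => // n IHn y.
rewrite ltnS => small hy.
have off_mid_out s : p s != 0 -> ~~ (off_mid a b y \subset s) ->
    delta s y = That a b p s y.
  move=> ps nsub; have hy' := patch_mid_inTheta s ab hy.
  have agree : {in s, y =1 patch_mid a b s y} by move=> i i_s; rewrite /patch_mid i_s.
  rewrite (delta_sample hy hy' agree) (That_eq_on_sample _ _ p agree) IHn //.
  rewrite off_mid_patch (leq_trans _ small) // proper_card // properEneq subsetIl.
  by rewrite andbT; apply: contra nsub => /eqP <-; apply: subsetIr.
apply: (eq_support_of_Ep_sqr_le (t := Defs.total y) (c := That a b p setT y) design_p.1).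
- by rewrite delta_unbiased // That_unbiased // design_p.2.
- move=> s ps; have [sub|nsub] := boolP (off_mid a b y \subset s).
    by rewrite That_off_mid_sub // subrr mulr0.
  by rewrite off_mid_out // subrr mul0r.
- exact: delta_dominates.
Qed.

End Admissibility.

Theorem proposition1 (R : realType) (N : nat) (a b : 'I_N -> R)
  (p : {set 'I_N} -> R) :
  (0 < N)%N ->
  (forall i, 0 < (b i - a i) / 2) ->
  is_design p ->
  (forall i, 0 < incl_prob p i) ->
  ~ (exists delta : estimator R N,
        depends_on_sample a b delta /\
        unbiased a b p delta /\
        (forall y, inTheta a b y -> risk p delta y <= risk p (That a b p) y) /\
        (exists y, inTheta a b y /\ risk p delta y < risk p (That a b p) y)).
Proof.
move=> _ hr design_p pi_gt0 [delta [hdep [hunb [hle [y [hy]]]]]].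
have ab i : a i <= b i by have := hr i; lra.
have pi_neq0 i : incl_prob p i != 0 by rewrite gt_eqF.
have eq_That := dominating_unbiased_eq_That ab design_p pi_neq0 hdep hunb hle hy.
suff -> : risk p delta y = risk p (That a b p) y by rewrite ltxx.
by apply: eq_Ep_support => s ps; rewrite eq_That.
Qed.
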